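(* Let $n\ge 1$ and $\psi,\eta\in(0,1)^n$. Let $Y\in\{0,1\}$ be a random bit with $\mathbb{P}(Y=1)=\mathbb{P}(Y=0)=1/2$, and conditionally on $Y$ let $X_1,\ldots,X_n\in\{0,1\}$ be independent with $\mathbb{P}(X_i=1\mid Y=1)=\psi_i$ and $\mathbb{P}(X_i=0\mid Y=0)=\eta_i$. Let $f^{\mathrm{OPT}}:\{0,1\}^n\to\{0,1\}$ be a decision rule minimizing $\mathbb{P}(f(X)\neq Y)$ over all $f:\{0,1\}^n\to\{0,1\}$, where $X=(X_1,\ldots,X_n)$. Let $\pi_i=(\psi_i+\eta_i)/2$ and $\gamma_i=\log\frac{\pi_i}{1-\pi_i}$. Then $$\mathbb{P}(f^{\mathrm{OPT}}(X)\neq Y)\ge\frac12\cdot 2^n\sqrt{\prod_{i=1}^n\pi_i(1-\pi_i)}\cdot\exp\Big(-\frac12\sum_{i=1}^n|\gamma_i|\Big).$$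
   Context: $\pi_i$ is the balanced accuracy of expert $i$; $\psi_i$ is its sensitivity and $\eta_i$ its specificity. *)

From HB Require Import structures.
From mathcomp Require Import all_boot all_order all_algebra.
From mathcomp Require Import reals sequences exp.
Set Implicit Arguments. Unset Strict Implicit. Unset Printing Implicit Defensive.
Import Order.TTheory GRing.Theory Num.Theory.
Local Open Scope ring_scope.

Definition lik1 (R : realType) (n : nat) (psi : 'I_n -> R)
  (x : {ffun 'I_n -> bool}) : R :=
  \prod_(i < n) (if x i then psi i else 1 - psi i).

Definition lik0 (R : realType) (n : nat) (eta : 'I_n -> R)
  (x : {ffun 'I_n -> bool}) : R :=
  \prod_(i < n) (if x i then 1 - eta i else eta i).

Definition joint (R : realType) (n : nat) (psi eta : 'I_n -> R)
  (x : {ffun 'I_n -> bool}) (y : bool) : R :=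
  2^-1 * (if y then lik1 psi x else lik0 eta x).

Definition err (R : realType) (n : nat) (psi eta : 'I_n -> R)
  (f : {ffun 'I_n -> bool} -> bool) : R :=
  \sum_(x : {ffun 'I_n -> bool}) \sum_(y : bool)
     (if f x != y then joint psi eta x y else 0).

Definition bacc (R : realType) (n : nat) (psi eta : 'I_n -> R) (i : 'I_n) : R :=
  (psi i + eta i) / 2.

Definition logodds (R : realType) (p : R) : R := ln (p / (1 - p)).

From HB Require Import structures.
From mathcomp Require Import all_boot all_order all_algebra.
From mathcomp Require Import reals sequences exp.
From mathcomp Require Import ring lra.
Set Implicit Arguments. Unset Strict Implicit. Unset Printing Implicit Defensive.
Import Order.TTheory GRing.Theory Num.Theory.
Local Open Scope ring_scope.

(* Every rule, the optimal one included, errs on x with probability at least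
   min (P(x, Y=1), P(x, Y=0)).  The likelihoods are products over the experts,
   a minimum of products dominates the product of the coordinatewise minima,
   and summing those over x factorises into
   prod_i (min (psi_i, 1 - eta_i) + min (1 - psi_i, eta_i)) = 2^n prod_i min (pi_i, 1 - pi_i).
   Finally min (p, 1 - p) = sqrt (p (1 - p)) exp (- |log (p / (1 - p))| / 2). *)

Section MinOfProducts.

Variable R : realDomainType.

Lemma prod_min_le_min_prod (I : finType) (F G : I -> R) :
  (forall i, 0 <= F i) -> (forall i, 0 <= G i) ->
  \prod_i Order.min (F i) (G i) <= Order.min (\prod_i F i) (\prod_i G i).
Proof.
move=> F0 G0; rewrite le_min; apply/andP; split; apply: ler_prod => i _;
  by rewrite le_min F0 G0 ge_min lexx ?orbT.
Qed.

Lemma prod_sum_min_le_sum_min_prod (I J : finType) (a c : I -> J -> R) :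
  (forall i j, 0 <= a i j) -> (forall i j, 0 <= c i j) ->
  \prod_i \sum_j Order.min (a i j) (c i j)
    <= \sum_(x : {ffun I -> J}) Order.min (\prod_i a i (x i)) (\prod_i c i (x i)).
Proof.
move=> a0 c0; rewrite bigA_distr_bigA /=; apply: ler_sum => x _.
exact: prod_min_le_min_prod.
Qed.

End MinOfProducts.

Lemma min_add_min_compl (R : realFieldType) (p q : R) :
  Order.min p (1 - q) + Order.min (1 - p) q
    = 2 * Order.min ((p + q) / 2) (1 - (p + q) / 2).
Proof.
case: (lerP p (1 - q)) => pq.
- rewrite (min_idPr (_ : q <= 1 - p)); last by lra.
  by rewrite (min_idPl (_ : (p + q) / 2 <= 1 - (p + q) / 2)); [field | lra].
- rewrite (min_idPl (_ : 1 - p <= q)); last by lra.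
  by rewrite (min_idPr (_ : 1 - (p + q) / 2 <= (p + q) / 2)); [field | lra].
Qed.

Lemma err_ge_sum_min_lik (R : realType) (n : nat) (psi eta : 'I_n -> R)
    (f : {ffun 'I_n -> bool} -> bool) :
  2^-1 * \sum_x Order.min (lik1 psi x) (lik0 eta x) <= err psi eta f.
Proof.
rewrite /err mulr_sumr; apply: ler_sum => x _.
rewrite big_bool /= /joint.
by case: (f x); rewrite /= ?add0r ?addr0 ler_wpM2l ?invr_ge0 ?ler0n ?ge_min ?lexx ?orbT.
Qed.

Lemma sum_min_lik_ge (R : realType) (n : nat) (psi eta : 'I_n -> R) :
  (forall i, 0 <= psi i <= 1) -> (forall i, 0 <= eta i <= 1) ->
  2 ^+ n * \prod_i Order.min (bacc psi eta i) (1 - bacc psi eta i)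
    <= \sum_x Order.min (lik1 psi x) (lik0 eta x).
Proof.
move=> psi01 eta01.
pose a i (b : bool) := if b then psi i else 1 - psi i.
pose c i (b : bool) := if b then 1 - eta i else eta i.
have a0 i b : 0 <= a i b by case: b; have := psi01 i; rewrite /a; lra.
have c0 i b : 0 <= c i b by case: b; have := eta01 i; rewrite /c; lra.
have -> : 2 ^+ n * \prod_i Order.min (bacc psi eta i) (1 - bacc psi eta i)
    = \prod_i \sum_b Order.min (a i b) (c i b).
  have -> : (2 : R) ^+ n = \prod_(i < n) 2 by rewrite prodr_const card_ord.
  rewrite -big_split /=.
  by apply: eq_bigr => i _; rewrite big_bool /= min_add_min_compl.
exact: prod_sum_min_le_sum_min_prod.
Qed.

Lemma sqr_min_compl (R : realType) (p : R) : 0 < p < 1 ->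
  Order.min p (1 - p) ^+ 2 = p * (1 - p) * expR (- `|logodds p|).
Proof.
move=> /andP[p0 p1].
have odds0 : 0 < p / (1 - p) by rewrite divr_gt0 // subr_gt0.
have expR_logodds : expR (logodds p) = p / (1 - p) by apply: lnK; rewrite posrE.
case: (lerP p (1 - p)) => h.
- have : p / (1 - p) <= 1 by rewrite ler_pdivrMr ?subr_gt0 // mul1r.
  move/ln_le0 => odds_le0.
  by rewrite ler0_norm // opprK expR_logodds; field; lra.
- have : 1 <= p / (1 - p) by rewrite ler_pdivlMr ?subr_gt0 // mul1r; lra.
  move/ln_ge0 => odds_ge0.
  by rewrite ger0_norm // expRN expR_logodds; field; lra.
Qed.

Lemma sqrt_prod_expR_logodds (R : realType) (I : finType) (p : I -> R) :
  (forall i, 0 < p i < 1) ->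
  Num.sqrt (\prod_i (p i * (1 - p i))) * expR (- (2^-1 * \sum_i `|logodds (p i)|))
    = \prod_i Order.min (p i) (1 - p i).
Proof.
move=> p01; set s := \sum_i _.
have expR_halve : expR (- (2^-1 * s)) = Num.sqrt (expR (- s)).
  rewrite -[in RHS](_ : 2%:R * - (2^-1 * s) = - s); last by field.
  by rewrite expRM_natl sqrtr_sqr ger0_norm ?expR_ge0.
rewrite expR_halve -sqrtrM; last first.
  by apply: prodr_ge0 => i _; have := p01 i; nra.
rewrite -sumrN expR_sum -big_split /=.
rewrite (eq_bigr (fun i => Order.min (p i) (1 - p i) ^+ 2)); last first.
  by move=> i _; rewrite sqr_min_compl.
rewrite prodrXl sqrtr_sqr ger0_norm //.
by apply: prodr_ge0 => i _; have := p01 i; rewrite le_min; lra.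
Qed.

(* The bound holds for every decision rule. *)
Theorem theorem3 (R : realType) (n : nat) (psi eta : 'I_n -> R)
  (hn : (1 <= n)%N)
  (hpsi : forall i, 0 < psi i < 1) (heta : forall i, 0 < eta i < 1)
  (fopt : {ffun 'I_n -> bool} -> bool)
  (hopt : forall f : {ffun 'I_n -> bool} -> bool, err psi eta fopt <= err psi eta f) :
  err psi eta fopt >=
    2^-1 * 2 ^+ n
    * Num.sqrt (\prod_(i < n) (bacc psi eta i * (1 - bacc psi eta i)))
    * expR (- (2^-1 * \sum_(i < n) `| logodds (bacc psi eta i) |)).
Proof.
have bacc01 i : 0 < bacc psi eta i < 1.
  by have := hpsi i; have := heta i; rewrite /bacc; lra.
rewrite -!mulrA sqrt_prod_expR_logodds //.
apply: le_trans _ (err_ge_sum_min_lik psi eta fopt).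
rewrite ler_wpM2l ?invr_ge0 ?ler0n //; apply: sum_min_lik_ge => i.
- by have := hpsi i; lra.
- by have := heta i; lra.
Qed.
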